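(* Let $f=a_1+2a_2+4a_3\in\mathcal{GB}_n^8$ with $a_1,a_2,a_3\in\mathcal{B}_n$. If $f$ is gbent, then its Gray image $\psi(f)(\mathbf{x},y_1,y_2)=a_1(\mathbf{x})y_1\oplus a_2(\mathbf{x})y_2\oplus a_3(\mathbf{x})$ is a semibent function in $\mathcal{B}_{n+2}$.
   Context: $\mathcal{B}_m$: Boolean functions $\mathbb{F}_2^m\to\mathbb{F}_2$; $\mathcal{GB}_n^q$: functions $\mathbb{F}_2^n\to\mathbb{Z}_q$ (Boolean values viewed as integers, sum in $\mathbb{Z}_8$). $\mathcal{H}^{(q)}_f(\mathbf{u})=\sum_{\mathbf{x}}\zeta_q^{f(\mathbf{x})}(-1)^{\mathbf{u}\cdot\mathbf{x}}$ with $\zeta_q=e^{2\pi i/q}$; $f$ is gbent if $|\mathcal{H}^{(q)}_f(\mathbf{u})|=2^{n/2}$ for all $\mathbf{u}$. $\mathcal{W}_g(\mathbf{w})=\sum_{\mathbf{z}}(-1)^{g(\mathbf{z})+\mathbf{w}\cdot\mathbf{z}}$. A Boolean function $g$ on $\mathbb{F}_2^m$ is $s$-plateaued if $|\mathcal{W}_g(\mathbf{w})|\in\{0,2^{(m+s)/2}\}$ for all $\mathbf{w}$; it is semibent if it is $1$-plateaued ($m$ odd) or $2$-plateaued ($m$ even). *)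

From HB Require Import structures.
From mathcomp Require Import all_boot all_order all_algebra all_field.
Set Implicit Arguments. Unset Strict Implicit. Unset Printing Implicit Defensive.
Import Order.TTheory GRing.Theory Num.Theory.
Local Open Scope ring_scope.

Definition dotF2 (n : nat) (u x : 'rV['F_2]_n) : 'F_2 := \sum_(i < n) u 0 i * x 0 i.

(* zeta_8 = e^{2 pi i/8} = (1 + i)/sqrt 2 in algC *)
Definition zeta8 : algC := (1 + 'i) / sqrtC 2.

Definition gWH (n : nat) (f : 'rV['F_2]_n -> 'Z_8) (u : 'rV['F_2]_n) : algC :=
  \sum_(x : 'rV['F_2]_n) zeta8 ^+ (val (f x)) * (-1) ^+ (val (dotF2 u x)).

Definition gbent (n : nat) (f : 'rV['F_2]_n -> 'Z_8) : Prop :=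
  forall u : 'rV['F_2]_n, `|gWH f u| = sqrtC (2 ^+ n).

Definition WH (m : nat) (g : 'rV['F_2]_m -> 'F_2) (w : 'rV['F_2]_m) : int :=
  \sum_(z : 'rV['F_2]_m) (-1) ^+ (val (g z + dotF2 w z)).

Definition plateaued (m s : nat) (g : 'rV['F_2]_m -> 'F_2) : Prop :=
  forall w : 'rV['F_2]_m,
    `|WH g w| = 0 \/ `|WH g w| = (2 ^ ((m + s) %/ 2))%:Z.

Definition semibent (m : nat) (g : 'rV['F_2]_m -> 'F_2) : Prop :=
  if odd m then plateaued 1 g else plateaued 2 g.

Definition gbfun (n : nat) (a1 a2 a3 : 'rV['F_2]_n -> 'F_2) (x : 'rV['F_2]_n) : 'Z_8 :=
  inZp (val (a1 x) + 2 * val (a2 x) + 4 * val (a3 x))%N.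

Definition gray (n : nat) (a1 a2 a3 : 'rV['F_2]_n -> 'F_2) (z : 'rV['F_2]_(n + 2)) : 'F_2 :=
  let x := lsubmx z in let y := rsubmx z in
  a1 x * y 0 0 + a2 x * y 0 1 + a3 x.

(* Splitting the transform of f along the four fibres of (a1, a2) gives
   H_f(u) = S00 + i S01 + z S10 + z i S11 with z = zeta_8 and integer Walsh sums S_v(u)
   of a3 restricted to the fibres.  Since z = (1 + i)/sqrt 2,
   |H_f(u)|^2 = sum S^2 + sqrt 2 (S00 (S10 - S11) + S01 (S10 + S11)), and sqrt 2 is
   irrational, gbentness means sum S^2 = 2^n with a vanishing cross term; a 2-adic
   descent then forces |S_v(u)| in {0, 2^(n/2)} (rounded down).  Summing over (y1, y2),
   the Walsh transform of the Gray image at (u, v) is exactly 4 S_v(u). *)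

From HB Require Import structures.
From mathcomp Require Import all_boot all_order all_algebra all_field.
From mathcomp Require Import zify ring.
Set Implicit Arguments. Unset Strict Implicit. Unset Printing Implicit Defensive.
Import Order.TTheory GRing.Theory Num.Theory.
Local Open Scope ring_scope.

Lemma int_parity (a : int) : exists b, a = 2 * b \/ a = 2 * b + 1.
Proof.
exists (a %/ 2)%Z; have := divz_eq a 2.
have := modz_ge0 a (isT : 2 != 0 :> int); have := ltz_pmod a (isT : 0 < 2 :> int).
lia.
Qed.

Lemma sqr_even_or_1mod8 (a : int) :
  (exists b, a = 2 * b) \/ (exists t, a * a = 8 * t + 1).
Proof.
have [b [->|->]] := int_parity a; first by left; exists b.
right; have [c [->|->]] := int_parity b.
  by exists (c * (2 * c + 1)); ring.
by exists ((2 * c + 1) * (c + 1)); ring.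
Qed.

Lemma sum4_sqr_8_even (A B C D K : int) : A * A + B * B + C * C + D * D = 8 * K ->
  exists a b c d, [/\ A = 2 * a, B = 2 * b, C = 2 * c & D = 2 * d].
Proof.
have [[a ->]|[ta eA]] := sqr_even_or_1mod8 A; have [[b ->]|[tb eB]] := sqr_even_or_1mod8 B;
have [[c ->]|[tc eC]] := sqr_even_or_1mod8 C; have [[d ->]|[td eD]] := sqr_even_or_1mod8 D;
move=> h; first [by exists a, b, c, d | exfalso; nia].
Qed.

Lemma sum4_sqr_4_even (A B C D : int) :
  A * A + B * B + C * C + D * D = 4 -> A * (C - D) + B * (C + D) = 0 ->
  exists a b c d, [/\ A = 2 * a, B = 2 * b, C = 2 * c & D = 2 * d].
Proof.
have [[a ->]|[ta eA]] := sqr_even_or_1mod8 A; have [[b ->]|[tb eB]] := sqr_even_or_1mod8 B;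
have [[c ->]|[tc eC]] := sqr_even_or_1mod8 C; have [[d ->]|[td eD]] := sqr_even_or_1mod8 D;
  move=> sum_sq cross; try by [exists a, b, c, d | exfalso; nia].
have sqr_ge0 (x : int) : 0 <= x * x by nia.
have [A1 B1 C1 D1] : [/\ A * A = 1, B * B = 1, C * C = 1 & D * D = 1].
  by move: (sqr_ge0 A) (sqr_ge0 B) (sqr_ge0 C) (sqr_ge0 D); split; lia.
(* Only the cross term rules out A, B, C, D all equal to +-1. *)
have : (C - D) * (C + D) == 0 by apply/eqP; nia.
by rewrite mulf_eq0 subr_eq0 addr_eq0 => /orP[]/eqP CD; exfalso; subst C; nia.
Qed.

Lemma sum4_sqr_pow2_even (n : nat) (A B C D : int) :
  A * A + B * B + C * C + D * D = 2 ^+ n.+2 -> A * (C - D) + B * (C + D) = 0 ->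
  exists a b c d, [/\ A = 2 * a, B = 2 * b, C = 2 * c & D = 2 * d].
Proof.
case: n => [|n] sum_sq cross; first exact: sum4_sqr_4_even.
by apply: (@sum4_sqr_8_even _ _ _ _ (2 ^+ n)); rewrite sum_sq !exprS; ring.
Qed.

Definition zero_or_pow2 (k : nat) (X : int) : Prop := `|X| = 0 \/ `|X| = 2 ^+ k.

Lemma sum4_sqr_pow2 (n : nat) (A B C D : int) :
  A * A + B * B + C * C + D * D = 2 ^+ n -> A * (C - D) + B * (C + D) = 0 ->
  [/\ zero_or_pow2 n./2 A, zero_or_pow2 n./2 B, zero_or_pow2 n./2 C & zero_or_pow2 n./2 D].
Proof.
rewrite /zero_or_pow2; elim/ltn_ind: n A B C D => -[|[|n]] IH A B C D sum_sq cross /=.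
- by rewrite expr0 in sum_sq *; split; nia.
- by rewrite expr0 expr1 in sum_sq *; split; nia.
have [a [b [c [d [eA eB eC eD]]]]] := sum4_sqr_pow2_even sum_sq cross; subst.
have [] := IH n (ltnW (ltnSn _)) a b c d; [by move: sum_sq; rewrite !exprS; nia | nia |].
by rewrite !normrM exprS (_ : `|2| = 2 :> int) //; split; lia.
Qed.

Lemma zero_or_pow2_mul4 (k : nat) (X : int) : zero_or_pow2 k X -> zero_or_pow2 k.+2 (4 * X).
Proof. by rewrite /zero_or_pow2 normrM !exprS mulrA; case=> ->; [left|right]; rewrite ?mulr0. Qed.

Lemma sqr_eq_twice_sqr (k y : int) : k * k = 2 * (y * y) -> y = 0.
Proof.
move=> eq_k; apply/eqP; apply: contraTT isT => y_neq0.
have k_neq0 : k != 0 by apply: contraNneq y_neq0 => k0; move: eq_k; rewrite k0; nia.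
have : (absz k * absz k = 2 * (absz y * absz y))%N.
  by have := congr1 absz eq_k; rewrite !abszM.
move=> /(congr1 (logn 2)); rewrite !lognM ?muln_gt0 ?absz_gt0 ?y_neq0 //.
by rewrite (_ : logn 2 2 = 1%N) //; lia.
Qed.

Lemma sqrtC2_neq0 : sqrtC 2 != 0 :> algC.
Proof. by rewrite sqrtC_eq0 pnatr_eq0. Qed.

Lemma sqrtC2_real : sqrtC 2 \is @Num.real algC.
Proof. by apply: ger0_real; rewrite sqrtC_ge0 ler0n. Qed.

Lemma sqrtC2_int_indep (p q : int) : q%:~R + sqrtC 2 * p%:~R = 0 :> algC -> p = 0 /\ q = 0.
Proof.
move=> /eqP; rewrite addrC addr_eq0 => /eqP /(congr1 (fun z => z ^+ 2)).
rewrite exprMn sqrtCK sqrrN -!rmorphXn /= -[2 : algC]/(2%:~R) -rmorphM => /intr_inj.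
rewrite !expr2 => eq_sq; have p0 := sqr_eq_twice_sqr (esym eq_sq).
by split=> //; move: eq_sq; rewrite p0; nia.
Qed.

Lemma zeta8_sqr : zeta8 ^+ 2 = 'i.
Proof.
rewrite /zeta8 expr_div_n sqrtCK sqrrD sqrCi expr1n.
by apply: (@mulIf _ 2); rewrite ?pnatr_eq0 // divfK ?pnatr_eq0 //; ring.
Qed.

Lemma zeta8_pow4 : zeta8 ^+ 4 = -1.
Proof. by rewrite (exprM _ 2 2) zeta8_sqr sqrCi. Qed.

Lemma zeta8_expZp (k : nat) : zeta8 ^+ val (inZp k : 'Z_8) = zeta8 ^+ k.
Proof.
have zeta8_8 : zeta8 ^+ 8 = 1 by rewrite (exprM _ 4 2) zeta8_pow4 sqrrN expr1n.
by rewrite /= [in RHS](divn_eq k 8) exprD mulnC exprM zeta8_8 expr1n mul1r.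
Qed.

Lemma normC2_zeta8_comb (a b c d : algC) :
  a \is Num.real -> b \is Num.real -> c \is Num.real -> d \is Num.real ->
  `|a + 'i * b + zeta8 * c + zeta8 * 'i * d| ^+ 2
    = a * a + b * b + c * c + d * d + sqrtC 2 * (a * (c - d) + b * (c + d)).
Proof.
move=> ra rb rc rd; set s := sqrtC 2.
have rs : (s^-1) \is Num.real by rewrite rpredV sqrtC2_real.
have rect : a + 'i * b + zeta8 * c + zeta8 * 'i * d
    = (a + (c - d) / s) + 'i * (b + (c + d) / s).
  rewrite /zeta8 -/s; apply/eqP; rewrite -subr_eq0; apply/eqP.
  rewrite (_ : _ - _ = ('i ^+ 2 + 1) * (d / s)); first by rewrite sqrCi addNr mul0r.
  by field; exact: sqrtC2_neq0.
rewrite rect normC2_rect; last 2 first.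
- by rewrite rpredD // rpredM // rpredB.
- by rewrite rpredD // rpredM // rpredD.
have ss : s ^+ 2 = 2 by rewrite sqrtCK.
apply/eqP; rewrite -subr_eq0; apply/eqP.
rewrite (_ : _ - _ = (2 - s ^+ 2) * (s * (a * (c - d) + b * (c + d)) + c * c + d * d) / s ^+ 2).
  by rewrite ss subrr !mul0r.
by field; exact: sqrtC2_neq0.
Qed.

Lemma normC_zeta8_comb_int (n : nat) (A B C D : int) :
  `|A%:~R + 'i * B%:~R + zeta8 * C%:~R + zeta8 * 'i * D%:~R : algC| = sqrtC (2 ^+ n) ->
  A * A + B * B + C * C + D * D = 2 ^+ n /\ A * (C - D) + B * (C + D) = 0.
Proof.
move=> /(congr1 (fun z => z ^+ 2)); rewrite sqrtCK normC2_zeta8_comb ?Rreal_int ?intr_int //.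
move=> /eqP; rewrite -subr_eq0 addrAC => /eqP.
rewrite (_ : _ - 2 ^+ n = (A * A + B * B + C * C + D * D - 2 ^+ n)%:~R); last first.
  by rewrite rmorphB rmorphXn /= !rmorphD !rmorphM.
rewrite (_ : _ * (C%:~R - D%:~R) + _ = (A * (C - D) + B * (C + D))%:~R); last first.
  by rewrite rmorphD !rmorphM rmorphB rmorphD.
by move=> /sqrtC2_int_indep [-> /eqP]; rewrite subr_eq0 => /eqP.
Qed.

Lemma signr_addF2 (R : pzRingType) (r t : 'F_2) :
  (-1) ^+ val (r + t) = (-1) ^+ val r * (-1) ^+ val t :> R.
Proof. by rewrite /= modn2 signr_odd exprD. Qed.

Lemma F2_cases (a : 'F_2) : a = 0 \/ a = 1.
Proof. by case: a => [[|[|?]] // ?]; [left|right]; exact: val_inj. Qed.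

Definition fiberWH (n : nat) (a1 a2 a3 : 'rV['F_2]_n -> 'F_2) (v1 v2 : 'F_2)
    (u : 'rV['F_2]_n) : int :=
  \sum_(x | (a1 x == v1) && (a2 x == v2)) (-1) ^+ val (a3 x + dotF2 u x).

Lemma gWH_gbfun (n : nat) (a1 a2 a3 : 'rV['F_2]_n -> 'F_2) (u : 'rV['F_2]_n) :
  gWH (gbfun a1 a2 a3) u = (fiberWH a1 a2 a3 0 0 u)%:~R + 'i * (fiberWH a1 a2 a3 0 1 u)%:~R
    + zeta8 * (fiberWH a1 a2 a3 1 0 u)%:~R + zeta8 * 'i * (fiberWH a1 a2 a3 1 1 u)%:~R.
Proof.
rewrite /fiberWH /gWH !(big_mkcond (fun x => (a1 x == _) && _)) /=.
rewrite !rmorph_sum !mulr_sumr -!big_split /=; apply: eq_bigr => x _.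
rewrite /gbfun zeta8_expZp exprD exprD (exprM _ 2) (exprM _ 4) zeta8_sqr zeta8_pow4.
rewrite signr_addF2 /=.
by case: (F2_cases (a1 x)) => ->; case: (F2_cases (a2 x)) => ->;
  rewrite ?rmorphM /= ?rmorphXn /= ?rmorphN1 ?expr0 ?expr1
          ?mul1r ?mulr0 ?mulr1 ?addr0 ?add0r ?mulrA.
Qed.

Lemma addF2_eq0 (a b : 'F_2) : (a + b == 0) = (a == b).
Proof. by case: (F2_cases a) => ->; case: (F2_cases b) => ->. Qed.

Lemma dotF2Dr (m : nat) (c y e : 'rV['F_2]_m) : dotF2 c (y + e) = dotF2 c y + dotF2 c e.
Proof. by rewrite /dotF2 -big_split; apply: eq_bigr => i _; rewrite mxE mulrDr. Qed.

Lemma dotF2_delta (m : nat) (c : 'rV['F_2]_m) (i : 'I_m) : dotF2 c (delta_mx 0 i) = c 0 i.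
Proof.
rewrite /dotF2 (bigD1 i) //= mxE !eqxx mulr1 big1 ?addr0 // => j /negPf ji.
by rewrite mxE ji andbF mulr0.
Qed.

Lemma sum_sign_dotF2 (m : nat) (c : 'rV['F_2]_m) :
  \sum_(y : 'rV['F_2]_m) (-1) ^+ val (dotF2 c y) = if c == 0 then 2 ^+ m else 0 :> int.
Proof.
have [->|c_neq0] := eqVneq c 0.
  rewrite (eq_bigr (fun _ => 1)) => [|y _]; last first.
    by rewrite /dotF2 big1 // => i _; rewrite mxE mul0r.
  by rewrite sumr_const card_mx card_Fp // mul1n -natrX.
have /existsP [i /eqP ci1] : [exists i, c 0 i == 1].
  apply: contraR c_neq0 => /existsPn ci0; apply/eqP/rowP => j.
  by rewrite mxE; case: (F2_cases (c 0 j)) (ci0 j) => ->; rewrite ?eqxx.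
have delta_invol : involutive (fun y : 'rV['F_2]_m => y + delta_mx 0 i).
  move=> y; rewrite -addrA (_ : delta_mx _ _ + _ = 0) ?addr0 //.
  by apply/rowP => j; rewrite !mxE; case: (_ && _); [exact: val_inj | exact: addr0].
set Sm := \sum_y _; suff: Sm = - Sm by lia.
rewrite {1}/Sm (reindex_inj (inv_inj delta_invol)) /Sm -sumrN; apply: eq_bigr => y _.
by rewrite dotF2Dr dotF2_delta ci1 signr_addF2 expr1 mulrN1.
Qed.

Lemma sum_row_mx (R : nmodType) (T : finType) (m k : nat) (F : 'rV[T]_(m + k) -> R) :
  \sum_z F z = \sum_(x : 'rV[T]_m) \sum_(y : 'rV[T]_k) F (row_mx x y).
Proof.
rewrite pair_big /= (reindex (fun p : 'rV[T]_m * 'rV[T]_k => row_mx p.1 p.2)) //=.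
apply: onW_bij; exists (fun z => (lsubmx z, rsubmx z)) => [[x y]|z] /=.
  by rewrite row_mxKl row_mxKr.
by rewrite hsubmxK.
Qed.

Lemma dotF2_row_mx (m k : nat) (w : 'rV['F_2]_(m + k)) (x : 'rV_m) (y : 'rV_k) :
  dotF2 w (row_mx x y) = dotF2 (lsubmx w) x + dotF2 (rsubmx w) y.
Proof.
by rewrite /dotF2 big_split_ord; congr (_ + _); apply: eq_bigr => i _;
  rewrite ?row_mxEl ?row_mxEr !mxE.
Qed.

Lemma dotF2_rV2 (v y : 'rV['F_2]_2) : dotF2 v y = v 0 0 * y 0 0 + v 0 1 * y 0 1.
Proof.
rewrite /dotF2 !big_ord_recl big_ord0 addr0.
by rewrite (_ : lift ord0 ord0 = 1 :> 'I_2) //; apply: val_inj.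
Qed.

Lemma sum_sign_rV2 (p q : 'F_2) :
  \sum_(y : 'rV['F_2]_2) (-1) ^+ val (p * y 0 0 + q * y 0 1)
    = if (p == 0) && (q == 0) then 4 else 0 :> int.
Proof.
pose c : 'rV['F_2]_2 := \row_j (if j == 0 then p else q).
rewrite (eq_bigr (fun y => (-1) ^+ val (dotF2 c y))) => [|y _]; last first.
  by rewrite dotF2_rV2 !mxE.
rewrite sum_sign_dotF2; congr (if _ then _ else _).
apply/eqP/andP => [c0|[/eqP p0 /eqP q0]].
  by split; [move: (congr1 (fun M : 'rV_2 => M 0 0) c0)
             | move: (congr1 (fun M : 'rV_2 => M 0 1) c0)]; rewrite !mxE /= => ->.
by apply/rowP => j; rewrite !mxE; case: (j == 0).
Qed.

Lemma WH_gray (n : nat) (a1 a2 a3 : 'rV['F_2]_n -> 'F_2) (w : 'rV['F_2]_(n + 2)) :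
  WH (gray a1 a2 a3) w = 4 * fiberWH a1 a2 a3 (rsubmx w 0 0) (rsubmx w 0 1) (lsubmx w).
Proof.
rewrite /WH sum_row_mx /fiberWH mulr_sumr [RHS]big_mkcond /=; apply: eq_bigr => x _.
set v := rsubmx w; set u := lsubmx w.
have split_exp (y : 'rV['F_2]_2) : gray a1 a2 a3 (row_mx x y) + dotF2 w (row_mx x y)
    = (a3 x + dotF2 u x) + ((a1 x + v 0 0) * y 0 0 + (a2 x + v 0 1) * y 0 1).
  by rewrite /gray row_mxKl row_mxKr dotF2_row_mx dotF2_rV2; ring.
rewrite (eq_bigr _ (fun y _ => congr1 (fun t => (-1) ^+ val t : int) (split_exp y))).
under eq_bigr => y _ do rewrite signr_addF2.
rewrite -mulr_sumr sum_sign_rV2 !addF2_eq0.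
by case: (_ && _); rewrite ?mulr0 ?mulr1 // mulrC.
Qed.

Lemma semibent_of_WH (m : nat) (g : 'rV['F_2]_m -> 'F_2) :
  (forall w, zero_or_pow2 m./2.+1 (WH g w)) -> semibent g.
Proof.
move=> WH_g; rewrite /semibent /plateaued; case: ifP => m_odd w;
  rewrite -natz natrX (_ : (_ %/ 2)%N = m./2.+1); try exact: WH_g;
  by rewrite -divn2; move: m_odd; rewrite -[in LHS](odd_double_half m); case: odd => /=; lia.
Qed.

Theorem mainTheorem11 (n : nat) (a1 a2 a3 : 'rV['F_2]_n -> 'F_2) :
  gbent (gbfun a1 a2 a3) -> semibent (gray a1 a2 a3).
Proof.
move=> gb; apply: semibent_of_WH => w; rewrite WH_gray (_ : (n + 2)./2 = n./2.+1) ?addn2 //.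
have := gb (lsubmx w); rewrite gWH_gbfun => /normC_zeta8_comb_int [sum_sq cross].
have [] := sum4_sqr_pow2 sum_sq cross => *.
by apply: zero_or_pow2_mul4; case: (F2_cases (rsubmx w 0 0)) => ->;
  case: (F2_cases (rsubmx w 0 1)) => ->.
Qed.
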